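(* Consider the multicast coalitional game with player set $\mathcal{N}=\{1,\ldots,N\}$ and value function $$v(S)=\sum_{i\in S}U_i-\sum_{i\in S}\frac{\alpha_i}{R_S}-\frac{\beta+\gamma}{R_S},\qquad R_S=\min_{i\in S}R_i,$$ for nonempty $S\subseteq\mathcal{N}$. Suppose $R_i=R_0$ and $P_{Rx,i}=P_{Rx}$ for all $i\in\mathcal{N}$. Then the core of the game is non-empty.
   Context: A transmitter multicasts a file of size $X>0$ bits to users $\mathcal{N}=\{1,\dots,N\}$. User $i$ has valuation $U_i\in\mathbb{R}$ for the file, downloads from the transmitter at rate $R_i>0$, and consumes receive power $P_{Rx,i}>0$; the transmitter transmits at power $P_{Tx}>0$. Costs per unit energy are $a>0$ at users and $b>0$ at the transmitter, and the bandwidth cost per second is $w>0$. Set $\alpha_i=aP_{Rx,i}X$, $\beta=bP_{Tx}X$, $\gamma=wX$. This defines a transferable-utility coalitional game $(\mathcal{N},v)$ with $v$ as in the claim (coalition $S$ receives the file by multicast at rate $R_S$). The core is the set of payoff vectors $(x_1,\dots,x_N)\in\mathbb{R}^N$ with $\sum_{i\in\mathcal{N}}x_i=v(\mathcal{N})$ and $\sum_{i\in S}x_i\ge v(S)$ for every nonempty $S\subseteq\mathcal{N}$. *)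

From HB Require Import structures.
From mathcomp Require Import all_boot all_order all_algebra.
Set Implicit Arguments. Unset Strict Implicit. Unset Printing Implicit Defensive.
Import Order.TTheory GRing.Theory Num.Theory.
Local Open Scope ring_scope.

(* R_S = min_{i in S} Rate i.  The big-min is seeded with the maximum of all
   rates (an upper bound), so for nonempty S this is exactly min_{i in S}. *)
Definition rate_of (R : realFieldType) (N : nat) (Rate : 'I_N -> R)
    (S : {set 'I_N}) : R :=
  \big[Num.min/ \big[Num.max/0]_(j < N) Rate j]_(i in S) Rate i.

Definition mc_value (R : realFieldType) (N : nat) (U alpha Rate : 'I_N -> R)
    (beta gamma : R) (S : {set 'I_N}) : R :=
  if S == set0 then 0 else
  \sum_(i in S) U i - \sum_(i in S) alpha i / rate_of Rate S
    - (beta + gamma) / rate_of Rate S.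

Definition in_core (R : realFieldType) (N : nat) (v : {set 'I_N} -> R)
    (x : 'I_N -> R) : Prop :=
  \sum_(i < N) x i = v setT /\
  forall S : {set 'I_N}, S != set0 -> v S <= \sum_(i in S) x i.

Definition core_nonempty (R : realFieldType) (N : nat)
    (v : {set 'I_N} -> R) : Prop := exists x : 'I_N -> R, in_core v x.

From HB Require Import structures.
From mathcomp Require Import all_boot all_order all_algebra.
Import Order.TTheory GRing.Theory Num.Theory.
Local Open Scope ring_scope.

(* With a common rate R0 every coalition S has R_S = R0, so
   v(S) = sum_(i in S) u_i - c with u_i = U_i - alpha_i / R0 and the fixed
   cost c = (beta + gamma) / R0 >= 0.  Sharing the fixed cost equally,
   x_i = u_i - c / N, the grand coalition is charged exactly c while a
   coalition S is charged only |S| c / N <= c, so x lies in the core. *)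

Lemma rate_of_const {R : realFieldType} {N : nat} {Rate : 'I_N -> R} {r : R}
    {S : {set 'I_N}} :
  S != set0 -> {in S, forall i, Rate i = r} -> rate_of Rate S = r.
Proof.
move=> /set0Pn[i0 i0S] Rate_r.
have r_le_seed : r <= \big[Num.max/0]_(j < N) Rate j.
  by rewrite -(Rate_r i0 i0S) le_bigmax.
rewrite /rate_of (eq_bigr (fun=> r)) // (bigD1 i0) //=.
by apply/min_idPl/le_bigmin.
Qed.

(* Only [0 < N] may be assumed for [0 <= c]: with no players R0, hence c, is arbitrary. *)
Lemma core_nonempty_fixed_cost {R : realFieldType} {N : nat}
    (u : 'I_N -> R) (c : R) (v : {set 'I_N} -> R) :
  v set0 = 0 -> ((0 < N)%N -> 0 <= c) ->
  (forall S, S != set0 -> v S = \sum_(i in S) u i - c) ->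
  core_nonempty v.
Proof.
move=> v0 c_ge0 vS.
pose x i := u i - c / N%:R.
have sum_x (S : {set 'I_N}) :
    \sum_(i in S) x i = \sum_(i in S) u i - #|S|%:R * (c / N%:R).
  by rewrite sumrB sumr_const [in RHS]mulr_natl.
have sum_all : \sum_(i < N) x i = \sum_(i in [set: 'I_N]) x i.
  by apply: eq_bigl => i; rewrite in_setT.
exists x; have [T0 | T_neq0] := eqVneq [set: 'I_N] set0.
  split=> [|S]; first by rewrite sum_all T0 big_set0 v0.
  by rewrite -subset0 -T0 subsetT.
have N_gt0 : (0 < N)%N by rewrite lt0n -(card_ord N) -cardsT cards_eq0.
have N_neq0 : N%:R != 0 :> R by rewrite pnatr_eq0 -lt0n.
split=> [|S S_neq0].
  by rewrite sum_all sum_x vS // cardsT card_ord mulrCA mulfV // mulr1.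
rewrite vS // sum_x lerD2l lerN2 mulrA ler_pdivrMr ?ltr0n // mulrC.
by rewrite ler_wpM2l ?c_ge0 // ler_nat -[leqRHS]card_ord max_card.
Qed.

Theorem theorem3 (R : realFieldType) (N : nat)
    (X a b w PTx : R) (U Rate PRx : 'I_N -> R) (R0 PRx0 : R) :
  0 < X -> 0 < a -> 0 < b -> 0 < w -> 0 < PTx ->
  (forall i, 0 < Rate i) -> (forall i, 0 < PRx i) ->
  (forall i, Rate i = R0) -> (forall i, PRx i = PRx0) ->
  let alpha := fun i => a * PRx i * X in
  let beta := b * PTx * X in
  let gamma := w * X in
  core_nonempty (mc_value U alpha Rate beta gamma).
Proof.
move=> X_gt0 _ b_gt0 w_gt0 PTx_gt0 Rate_gt0 _ Rate_R0 _ alpha beta gamma.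
apply: (core_nonempty_fixed_cost (fun i => U i - alpha i / R0)
                                  ((beta + gamma) / R0)).
- by rewrite /mc_value eqxx.
- move=> N_gt0; rewrite -(Rate_R0 (Ordinal N_gt0)).
  by rewrite divr_ge0 ?ltW ?Rate_gt0 // addr_gt0 ?mulr_gt0.
- move=> S S_neq0; rewrite /mc_value (negbTE S_neq0).
  by rewrite (rate_of_const S_neq0 (in1W Rate_R0)) sumrB mulrDl.
Qed.
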